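(* Let $U\in\mathbb{R}^{d\times n}$ be a frame, $z\in\mathbb{R}^n_{++}$, $c\in\mathbb{R}^n_{++}$ with $\langle c,1_n\rangle=d$, let $\emptyset\ne T\subsetneq[n]$, and let $h:=h^{U,z}_T$. Then: (1) $h$ is an increasing function of $\alpha$; (2) $\lim_{\alpha\to\infty}h(\alpha)=\operatorname{rk}(U_T)$; (3) $\langle c,1_T\rangle-h(1)\ge\gamma$, where $\gamma$ is the margin of $T$; (4) if $\operatorname{rk}(U_T)\ge\langle c,1_T\rangle$, then for the margin $\gamma$ of $T$ and any $\delta\in[0,\gamma)$, there is a finite solution $\alpha<\infty$ (with $\alpha\ge1$) to the equation $h(\alpha)=h(1)+\delta$.
   Context: A frame is a full row rank matrix $U=(u_1,\dots,u_n)\in\mathbb{R}^{d\times n}$; $U_T,Z_T$ denote restrictions to $T$, $\bar T=[n]\setminus T$, $Z=\mathrm{diag}(z)$, $1_T$ the indicator of $T$, $\circ$ the entrywise product. $\mathrm{lev}^U_j(z):=z_ju_j^{\mathsf T}(UZU^{\mathsf T})^{-1}u_j$. Margin of $T$: the largest $\gamma\ge0$ such that some $\nu\in\mathbb{R}$ satisfies $\max_{j\in T}(\mathrm{lev}^U_j(z)-c_j)\le\nu-\gamma\le\nu+\gamma\le\min_{j\notin T}(\mathrm{lev}^U_j(z)-c_j)$. Progress function: $h^{U,z}_T(\alpha):=\sum_{j\in T}\mathrm{lev}^U_j(z\circ(1_{\bar T}+\alpha1_T))=\mathrm{tr}[\alpha U_TZ_TU_T^{\mathsf T}(U_{\bar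 T}Z_{\bar T}U_{\bar T}^{\mathsf T}+\alpha U_TZ_TU_T^{\mathsf T})^{-1}]$ for $\alpha>0$. *)

From HB Require Import structures.
From mathcomp Require Import all_boot all_order all_algebra.
From mathcomp Require Import all_classical all_reals topology normedtype.
Set Implicit Arguments. Unset Strict Implicit. Unset Printing Implicit Defensive.
Import Order.TTheory GRing.Theory Num.Theory.
Local Open Scope ring_scope.

Section FrameDefs.
Variables (R : realType) (d n : nat).

Definition frame (U : 'M[R]_(d, n)) : Prop := \rank U = d.

Definition Zdiag (z : 'I_n -> R) : 'M[R]_n := diag_mx (\row_k z k).

Definition lev (U : 'M[R]_(d, n)) (z : 'I_n -> R) (j : 'I_n) : R :=
  z j * (((col j U)^T *m invmx (U *m Zdiag z *m U^T) *m col j U) ord0 ord0).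

Definition zscale (T : {set 'I_n}) (z : 'I_n -> R) (alpha : R) : 'I_n -> R :=
  fun k => z k * (if k \in T then alpha else 1).

Definition progress (U : 'M[R]_(d, n)) (z : 'I_n -> R) (T : {set 'I_n})
  (alpha : R) : R :=
  \sum_(j in T) lev U (zscale T z alpha) j.

Definition subcols (U : 'M[R]_(d, n)) (T : {set 'I_n}) : 'M[R]_(d, #|T|) :=
  colsub (fun k : 'I_#|T| => enum_val k) U.

Definition margin_feasible (U : 'M[R]_(d, n)) (z c : 'I_n -> R)
  (T : {set 'I_n}) (gamma : R) : Prop :=
  0 <= gamma /\ exists nu : R,
    (forall j, j \in T -> lev U z j - c j <= nu - gamma) /\
    (forall j, j \notin T -> nu + gamma <= lev U z j - c j).

Definition is_margin (U : 'M[R]_(d, n)) (z c : 'I_n -> R)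
  (T : {set 'I_n}) (gamma : R) : Prop :=
  margin_feasible U z c T gamma /\
  forall g, margin_feasible U z c T g -> g <= gamma.

End FrameDefs.

From HB Require Import structures.
From mathcomp Require Import all_boot all_order all_algebra.
From mathcomp Require Import all_classical all_reals topology normedtype.
From mathcomp Require Import derive ring lra.
Import Order.TTheory GRing.Theory Num.Theory.
Import numFieldNormedType.Exports.
Local Open Scope classical_set_scope.
Local Open Scope ring_scope.

(* With A = U_T Z_T U_T^T, B = U_{T̄} Z_{T̄} U_{T̄}^T and M_a = B + a A, we have
   h(a) = tr(a A M_a^-1) = d - tr(B M_a^-1), and M_a^-1 decreases in the Loewner
   order, so h increases.  Factoring A = W E W^T through a column basis W of U_T
   (r = rk U_T columns), the Woodbury identity turns h(a) into tr((1 + a^-1 C)^-1)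
   for a fixed r x r matrix C.  By Cramer's rule this is a rational function of
   t = 1/a, continuous on [0, 1] with value r at t = 0: this gives the limit, and
   the intermediate value theorem gives the solution a >= 1 of h(a) = h(1) + delta.
   The margin bound only uses that the leverages sum to d = <c, 1>. *)

Set Implicit Arguments. Unset Strict Implicit. Unset Printing Implicit Defensive.

Section Resolvent.
Variables (F : comUnitRingType) (m : nat).
Implicit Types M N : 'M[F]_m.

Lemma invmxBl M N : M \in unitmx -> N \in unitmx ->
  invmx M - invmx N = invmx N *m (N - M) *m invmx M.
Proof.
by move=> uM uN; rewrite mulmxBr mulmxBl mulVmx // mul1mx -mulmxA mulmxV ?mulmx1.
Qed.

Lemma invmxBr M N : M \in unitmx -> N \in unitmx ->
  invmx M - invmx N = invmx M *m (N - M) *m invmx N.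
Proof.
by move=> uM uN; rewrite mulmxBr mulmxBl -mulmxA mulmxV // mulmx1 mulVmx ?mul1mx.
Qed.

Lemma invmx_rank_update r M (W : 'M_(m, r)) (V : 'M_(r, m)) (E : 'M_r) s :
  M \in unitmx -> M + s *: (W *m E *m V) \in unitmx ->
  V *m invmx M *m W \in unitmx ->
  (invmx (V *m invmx M *m W) + s *: E) *m
    (V *m invmx (M + s *: (W *m E *m V)) *m W) = 1%:M.
Proof.
move=> uM uMs uK; set K := V *m invmx M *m W.
set N := V *m invmx (M + _) *m W.
have KN : K - N = s *: (K *m E *m N).
  rewrite -mulmxBl -mulmxBr invmxBr // addrC addKr.
  by rewrite -scalemxAr -scalemxAl -scalemxAr -scalemxAl !mulmxA.
have EN : s *: (E *m N) = 1%:M - invmx K *m N.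
  by rewrite -(mulVmx uK) -mulmxBr KN -scalemxAr 2!(mulmxA (invmx K)) mulVmx ?mul1mx.
by rewrite mulmxDl -scalemxAl EN addrC subrK.
Qed.

Lemma invmx_mulmx1 M N : M *m N = 1%:M -> invmx M = N.
Proof.
move=> MN; have [uM _] := mulmx1_unit MN.
by rewrite -[invmx M]mulmx1 -MN mulmxA mulVmx ?mul1mx.
Qed.

End Resolvent.

Section QuadraticForms.
Variable R : realFieldType.

Definition psd m (X : 'M[R]_m) := forall v : 'rV_m, 0 <= (v *m X *m v^T) 0 0.

Definition posdef m (X : 'M[R]_m) :=
  forall v : 'rV_m, v != 0 -> 0 < (v *m X *m v^T) 0 0.

Lemma quad_diag_mx q (w : 'I_q -> R) (v : 'rV[R]_q) :
  (v *m diag_mx (\row_k w k) *m v^T) 0 0 = \sum_k w k * v 0 k ^+ 2.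
Proof. by rewrite mul_mx_diag !mxE; apply: eq_bigr => k _; rewrite !mxE; ring. Qed.

Lemma quad_congr p q (P : 'M[R]_(p, q)) (X : 'M[R]_q) (v : 'rV_p) :
  v *m (P *m X *m P^T) *m v^T = (v *m P) *m X *m (v *m P)^T.
Proof. by rewrite trmx_mul !mulmxA. Qed.

Lemma posdef_psd m (X : 'M[R]_m) : posdef X -> psd X.
Proof.
move=> pX v; have [->|v_neq0] := eqVneq v 0; last exact/ltW/pX.
by rewrite !mul0mx mxE.
Qed.

Lemma psdD m (X Y : 'M[R]_m) : psd X -> psd Y -> psd (X + Y).
Proof. by move=> pX pY v; rewrite mulmxDr mulmxDl mxE addr_ge0. Qed.

Lemma psdZ m (X : 'M[R]_m) s : 0 <= s -> psd X -> psd (s *: X).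
Proof. by move=> s0 pX v; rewrite -scalemxAr -scalemxAl mxE mulr_ge0. Qed.

Lemma posdefD_psd m (X Y : 'M[R]_m) : posdef X -> psd Y -> posdef (X + Y).
Proof. by move=> pX pY v v0; rewrite mulmxDr mulmxDl mxE ltr_wpDr ?pX. Qed.

Lemma psd_diag_mx q (w : 'I_q -> R) :
  (forall k, 0 <= w k) -> psd (diag_mx (\row_k w k)).
Proof.
by move=> w0 v; rewrite quad_diag_mx sumr_ge0 // => k _; rewrite mulr_ge0 ?sqr_ge0.
Qed.

Lemma posdef_diag_mx q (w : 'I_q -> R) :
  (forall k, 0 < w k) -> posdef (diag_mx (\row_k w k)).
Proof.
move=> w0 v v_neq0; rewrite quad_diag_mx lt_def sumr_ge0 ?andbT; last first.
  by move=> k _; rewrite mulr_ge0 ?sqr_ge0 ?ltW.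
apply: contra v_neq0 => /eqP/psumr_eq0P v0; apply/eqP/rowP => k.
have /eqP := v0 (fun i _ => mulr_ge0 (ltW (w0 i)) (sqr_ge0 _)) k isT.
by rewrite mulf_eq0 gt_eqF //= sqrf_eq0 mxE => /eqP.
Qed.

Lemma psd_congr p q (P : 'M[R]_(p, q)) (X : 'M[R]_q) :
  psd X -> psd (P *m X *m P^T).
Proof. by move=> pX v; rewrite quad_congr. Qed.

Lemma posdef_congr p q (P : 'M[R]_(p, q)) (X : 'M[R]_q) :
  posdef X -> row_free P -> posdef (P *m X *m P^T).
Proof. by move=> pX fP v v_neq0; rewrite quad_congr pX ?mulmx_free_eq0. Qed.

Lemma posdef_unitmx m (X : 'M[R]_m) : posdef X -> X \in unitmx.
Proof.
move=> pX; rewrite -row_free_unit -kermx_eq0; apply/eqP/row_matrixP => i.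
rewrite row0; apply: contraTeq isT => ker_neq0.
by have := pX _ ker_neq0; rewrite -row_mul mulmx_ker row0 mul0mx mxE ltxx.
Qed.

Lemma posdef_invmx m (X : 'M[R]_m) : posdef X -> X^T = X -> posdef (invmx X).
Proof.
move=> pX sX v v_neq0; have uX := posdef_unitmx pX.
have vX_neq0 : v *m invmx X != 0.
  by apply: contraNneq v_neq0 => vX0; rewrite -(mulmxKV uX v) vX0 mul0mx.
by have := pX _ vX_neq0; rewrite trmx_mul trmx_inv sX !mulmxA mulmxKV.
Qed.

Lemma psd_diag_ge0 m (X : 'M[R]_m) k : psd X -> 0 <= X k k.
Proof. by move=> /(_ (delta_mx 0 k)); rewrite -rowE trmx_delta -colE !mxE. Qed.

Lemma psd_invmxB m (M A : 'M[R]_m) s :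
  posdef M -> M^T = M -> psd A -> A^T = A -> 0 <= s ->
  psd (invmx M - invmx (M + s *: A)).
Proof.
move=> pM sM pA sA s0.
have pN : posdef (M + s *: A) by apply: posdefD_psd => //; apply: psdZ.
have sN : (M + s *: A)^T = M + s *: A by rewrite linearD linearZ /= sM sA.
have uM := posdef_unitmx pM; have uN := posdef_unitmx pN.
set X := invmx M; set Y := invmx (M + s *: A).
have sY : Y^T = Y by rewrite trmx_inv sN.
have NM : M + s *: A - M = s *: A by rewrite addrC addKr.
have XY : X - Y = s *: (Y *m A *m X).
  by rewrite invmxBl // NM -scalemxAr -scalemxAl.
have YX : X - Y = s *: (X *m A *m Y).
  by rewrite invmxBr // NM -scalemxAr -scalemxAl.
have -> : X - Y = s *: (Y *m A *m Y) + s ^+ 2 *: (Y *m A *m X *m A *m Y).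
  have HX : X = Y + s *: (X *m A *m Y) by rewrite -YX addrC subrK.
  by rewrite {1}XY {1}HX mulmxDr -scalemxAr scalerDr scalerA -expr2 !mulmxA.
apply: psdD; apply: psdZ; rewrite ?exprn_ge0 //.
  by rewrite -{2}sY; apply: psd_congr.
have -> : Y *m A *m X *m A *m Y = (Y *m A) *m X *m (Y *m A)^T.
  by rewrite trmx_mul sA sY !mulmxA.
exact/psd_congr/posdef_psd/posdef_invmx.
Qed.

End QuadraticForms.

Lemma mxtrace_mul_diag_mx (F : comNzRingType) p q (P : 'M[F]_(p, q)) (w : 'I_q -> F)
    (X : 'M_p) :
  \tr (P *m diag_mx (\row_k w k) *m P^T *m X) = \sum_k w k * (P^T *m X *m P) k k.
Proof.
rewrite -!mulmxA mxtrace_mulC -!mulmxA mul_diag_mx /mxtrace.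
by apply: eq_bigr => k _; rewrite !mxE.
Qed.

Lemma quad_col (F : pzRingType) p q (P : 'M[F]_(p, q)) (X : 'M_p) j :
  ((col j P)^T *m X *m col j P) 0 0 = (P^T *m X *m P) j j.
Proof. by rewrite tr_col -row_mul colE mulmxA -row_mul -colE /row /col !mxE. Qed.

Lemma mxtrace_invmx_rational (R : realType) r (C : 'M[R]_r) :
  exists g : R -> R, forall t, 1%:M + t *: C \in unitmx ->
    g t = \tr (invmx (1%:M + t *: C)) /\ {for t, continuous g}.
Proof.
pose Cp : 'M[{poly R}]_r := \matrix_(i, j) ((i == j)%:R%:P + (C i j)%:P * 'X).
have CpE t : map_mx (horner_eval t) Cp = 1%:M + t *: C.
  by apply/matrixP => i j; rewrite !mxE /horner_eval !hornerE /= mulrC.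
(* Cramer's rule: invmx = adj / det, both polynomial in t. *)
exists (fun t => (\tr (\adj Cp)).[t] / (\det Cp).[t]) => t uCt.
have detE : (\det Cp).[t] = \det (1%:M + t *: C) by rewrite -CpE det_map_mx.
have adjE : (\tr (\adj Cp)).[t] = \tr (\adj (1%:M + t *: C)).
  rewrite -CpE -map_mx_adj /mxtrace horner_sum.
  by apply: eq_bigr => i _; rewrite [RHS]mxE.
split; first by rewrite /invmx uCt mxtraceZ detE adjE mulrC.
apply: continuousM; first exact: continuous_horner.
apply: continuousV; last exact: continuous_horner.
by rewrite detE -unitfE -unitmxE.
Qed.

Section InverseSubstitution.
Variables (R : realType) (h g : R -> R).
Hypothesis hg : forall a, 0 < a -> h a = g a^-1.

Lemma cvgy_inv_substitution : {for 0, continuous g} -> h a @[a --> +oo] --> g 0.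
Proof.
move=> g0.
have inv0 : (fun a : R => a^-1) @ +oo --> (0 : R).
  apply/(@cvgrVy _ _ _ _ (fun a : R => a^-1)); first by near=> a; rewrite invr_gt0.
  have -> : unstable.inv_fun (fun a : R => a^-1) = id.
    by apply/funext => a; rewrite /unstable.inv_fun invrK.
  exact: cvg_id.
have : (g \o (fun a : R => a^-1)) @ +oo --> g 0 by apply: cvg_comp inv0 g0.
apply: cvg_trans; apply: near_eq_cvg.
by near=> a; rewrite /= hg.
Unshelve. all: by end_near.
Qed.

Lemma ivt_inv_substitution v :
  (forall t, 0 <= t <= 1 -> {for t, continuous g}) -> g 1 <= v -> v < g 0 ->
  exists2 a, 1 <= a & h a = v.
Proof.
move=> gc g1v vg0.
have [t tin gtv] : exists2 t, t \in `[0, 1] & g t = v.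
  apply: IVT; first exact: ler01.
    by apply: continuous_in_subspaceT => t; rewrite inE /= in_itv /=; exact: gc.
  by rewrite ge_min le_max g1v orbT /= ltW.
move: tin; rewrite in_itv /= => /andP[t0 t1].
have t_gt0 : 0 < t.
  by rewrite lt_def t0 andbT; apply: contraTneq vg0 => <-; rewrite -gtv ltxx.
exists t^-1; first by rewrite invr_ge1 ?unitfE ?gt_eqF.
by rewrite hg ?invr_gt0 // invrK.
Qed.

End InverseSubstitution.

Definition restrict_wt (R : realType) n (S : {set 'I_n}) (w : 'I_n -> R) : 'I_n -> R :=
  fun k => if k \in S then w k else 0.

Section Gram.
Variables (R : realType) (d n : nat) (U : 'M[R]_(d, n)).
Implicit Types (w z : 'I_n -> R) (T : {set 'I_n}).

Definition gram w : 'M[R]_d := U *m Zdiag w *m U^T.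

Lemma trmx_gram w : (gram w)^T = gram w.
Proof. by rewrite /gram !trmx_mul trmxK tr_diag_mx mulmxA. Qed.

Lemma gram_posdef w : frame U -> (forall k, 0 < w k) -> posdef (gram w).
Proof.
by move=> fU w0; apply: posdef_congr; [exact: posdef_diag_mx | rewrite /row_free fU].
Qed.

Lemma gram_unitmx w : frame U -> (forall k, 0 < w k) -> gram w \in unitmx.
Proof. by move=> fU w0; apply/posdef_unitmx/gram_posdef. Qed.

Lemma mxtrace_gram_mul w (X : 'M_d) :
  \tr (gram w *m X) = \sum_j w j * (U^T *m X *m U) j j.
Proof. exact: mxtrace_mul_diag_mx. Qed.

Lemma mxtrace_gram_mul_ge0 w (X : 'M_d) :
  (forall k, 0 <= w k) -> psd X -> 0 <= \tr (gram w *m X).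
Proof.
move=> w0 pX; rewrite mxtrace_gram_mul sumr_ge0 // => k _.
by rewrite mulr_ge0 // psd_diag_ge0 // -{2}[U]trmxK; apply: psd_congr.
Qed.

Lemma levE w j : lev U w j = w j * (U^T *m invmx (gram w) *m U) j j.
Proof. by rewrite /lev quad_col. Qed.

Lemma sum_lev w : frame U -> (forall k, 0 < w k) -> \sum_j lev U w j = d%:R.
Proof.
move=> fU w0; under eq_bigr do rewrite levE.
by rewrite -mxtrace_gram_mul mulmxV ?mxtrace1 ?gram_unitmx.
Qed.

Lemma gram_zscale T z a :
  gram (zscale T z a) = gram (restrict_wt (~: T) z) + a *: gram (restrict_wt T z).
Proof.
rewrite /gram scalemxAl scalemxAr -mulmxDl -mulmxDr; congr (_ *m _ *m _).
apply/matrixP => i j; rewrite !mxE /zscale /restrict_wt finset.in_setC.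
by case: (i \in T); case: (i == j); rewrite /= ?mulr1n ?mulr0n; ring.
Qed.

Lemma zscale_gt0 T z a : (forall k, 0 < z k) -> 0 < a -> forall k, 0 < zscale T z a k.
Proof. by move=> z0 a0 k; rewrite /zscale; case: (k \in T); rewrite mulr_gt0. Qed.

Lemma restrict_wt_ge0 T z : (forall k, 0 < z k) -> forall k, 0 <= restrict_wt T z k.
Proof. by move=> z0 k; rewrite /restrict_wt; case: ifP => // _; exact: ltW. Qed.

Lemma progressE T z a :
  progress U z T a = a * \tr (gram (restrict_wt T z) *m invmx (gram (zscale T z a))).
Proof.
rewrite /progress big_mkcond mxtrace_gram_mul mulr_sumr; apply: eq_bigr => j _.
rewrite levE /zscale /restrict_wt; case: (j \in T); rewrite ?mul0r ?mulr0 //.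
by rewrite mulrA [z j * a]mulrC.
Qed.

Lemma progress_compl T z a : frame U -> (forall k, 0 < z k) -> 0 < a ->
  progress U z T a =
  d%:R - \tr (gram (restrict_wt (~: T) z) *m invmx (gram (zscale T z a))).
Proof.
move=> fU z0 a0; rewrite progressE.
have /(congr1 mxtrace) := mulmxV (gram_unitmx fU (zscale_gt0 T z0 a0)).
rewrite {1}gram_zscale mulmxDl mxtraceD mxtrace1 -scalemxAl mxtraceZ => <-.
by rewrite addrC addKr.
Qed.

Lemma progress_mono T z a b : frame U -> (forall k, 0 < z k) -> 0 < a -> a <= b ->
  progress U z T a <= progress U z T b.
Proof.
move=> fU z0 a0 ab; have b0 := lt_le_trans a0 ab.
rewrite !progress_compl // lerD2l lerN2 -subr_ge0 -raddfB /= -mulmxBr.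
apply: mxtrace_gram_mul_ge0; first exact: restrict_wt_ge0.
have -> : gram (zscale T z b) =
          gram (zscale T z a) + (b - a) *: gram (restrict_wt T z).
  by rewrite !gram_zscale -addrA -scalerDl [a + _]addrC subrK.
apply: psd_invmxB; rewrite ?trmx_gram ?subr_ge0 //.
  exact/gram_posdef/zscale_gt0.
by apply: psd_congr; apply: psd_diag_mx; apply: restrict_wt_ge0.
Qed.

Lemma gram_restrict_wt T z :
  gram (restrict_wt T z) =
  subcols U T *m Zdiag (fun k => z (enum_val k)) *m (subcols U T)^T.
Proof.
apply/matrixP => i l; rewrite /gram !mul_mx_diag !mxE.
transitivity (\sum_(k in T) U i k * z k * U l k).
  rewrite [RHS]big_mkcond /=; apply: eq_bigr => k _; rewrite !mxE /restrict_wt.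
  by case: (k \in T); rewrite ?mulr0 ?mul0r.
by rewrite big_enum_val; apply: eq_bigr => k _; rewrite !mxE.
Qed.

Lemma progress_trace_invmx T z : frame U -> (forall k, 0 < z k) ->
  exists C : 'M[R]_(\rank (subcols U T)), forall a, 0 < a ->
    1%:M + a^-1 *: C \in unitmx /\
    progress U z T a = \tr (invmx (1%:M + a^-1 *: C)).
Proof.
move=> fU z0; set W := col_base (subcols U T).
set E := row_base (subcols U T) *m Zdiag (fun k => z (enum_val k)) *m
         (row_base (subcols U T))^T.
have AE : gram (restrict_wt T z) = W *m E *m W^T.
  rewrite gram_restrict_wt /E /W 2!(mulmxA (col_base _)) mulmx_base.
  by rewrite -[in RHS]mulmxA -trmx_mul mulmx_base.
have pE : posdef E.
  by apply: posdef_congr; [exact: posdef_diag_mx | exact: row_base_free].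
have uE := posdef_unitmx pE.
set M1 := gram (zscale T z 1).
have pM1 : posdef M1 := gram_posdef fU (zscale_gt0 T z0 ltr01).
set K := W^T *m invmx M1 *m W.
have uK : K \in unitmx.
  apply/posdef_unitmx; rewrite /K -[W in _ *m W]trmxK.
  apply: posdef_congr; first exact/posdef_invmx/trmx_gram.
  by rewrite /row_free mxrank_tr; exact: col_base_full.
(* Woodbury: N_a := W^T M_a^-1 W satisfies N_a^-1 = K^-1 + (a - 1) E, so
   a E N_a inverts 1 + a^-1 (K^-1 E^-1 - 1). *)
clearbody W E; exists (invmx K *m invmx E - 1%:M) => a a0.
set Ma := gram (zscale T z a); set N := W^T *m invmx Ma *m W.
have MaE : Ma = M1 + (a - 1) *: (W *m E *m W^T).
  by rewrite /Ma /M1 !gram_zscale AE -addrA -scalerDl [1 + _]addrC subrK.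
have woodbury : (invmx K + (a - 1) *: E) *m N = 1%:M.
  have uMa : Ma \in unitmx := gram_unitmx fU (zscale_gt0 T z0 a0).
  rewrite /N MaE; apply: invmx_rank_update => //; first exact: posdef_unitmx.
  by rewrite -MaE.
have LaEN :
    (1%:M + a^-1 *: (invmx K *m invmx E - 1%:M)) *m (a *: (E *m N)) = 1%:M.
  rewrite -[in RHS]woodbury mulmxDl mul1mx -scalemxAl -scalemxAr scalerA.
  rewrite mulVf ?gt_eqF // scale1r mulmxBl mul1mx (mulmxA (invmx K *m _)) mulmxKV //.
  by rewrite mulmxDl -scalemxAl scalerBl scale1r addrCA.
have [uL _] := mulmx1_unit LaEN.
split => //; rewrite (invmx_mulmx1 LaEN) progressE AE mxtraceZ.
by rewrite -!mulmxA mxtrace_mulC !mulmxA.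
Qed.

Lemma progress_continuous_in_inv T z : frame U -> (forall k, 0 < z k) ->
  exists g : R -> R, [/\ g 0 = (\rank (subcols U T))%:R,
    forall t, 0 <= t -> {for t, continuous g} &
    forall a, 0 < a -> progress U z T a = g a^-1].
Proof.
move=> fU z0; have [C hC] := progress_trace_invmx T fU z0.
have [g hg] := mxtrace_invmx_rational C.
have unit_t t : 0 <= t -> 1%:M + t *: C \in unitmx.
  rewrite le_eqVlt => /predU1P[<- | t0]; first by rewrite scale0r addr0 unitmx1.
  by have [] := hC t^-1; rewrite ?invr_gt0 ?invrK.
exists g; split.
- by rewrite (hg 0 (unit_t 0 (lexx 0))).1 scale0r addr0 invmx1 mxtrace1.
- by move=> t /unit_t /hg[].
- by move=> a a0; have [/hg[ga _] ->] := hC a a0; rewrite ga.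
Qed.

End Gram.

Lemma zscale1 (R : realType) n (T : {set 'I_n}) (z : 'I_n -> R) : zscale T z 1 = z.
Proof. by apply/funext => k; rewrite /zscale; case: (k \in T); rewrite mulr1. Qed.

Lemma margin_le_progress1 (R : realType) d n (U : 'M[R]_(d, n)) (z c : 'I_n -> R)
    (T : {set 'I_n}) gamma :
  frame U -> (forall k, 0 < z k) -> \sum_j c j = d%:R ->
  T != finset.set0 -> T != finset.setTfor 'I_n -> is_margin U z c T gamma ->
  gamma <= \sum_(j in T) c j - progress U z T 1.
Proof.
move=> fU z0 sc Tn0 TnT [[g0 [nu [inT notinT]]] _].
rewrite /progress zscale1 -opprB -sumrB.
set S := \sum_(j in T) (lev U z j - c j).
have total : \sum_j (lev U z j - c j) = 0 by rewrite sumrB sum_lev // sc subrr.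
have SC : \sum_(j in ~: T) (lev U z j - c j) = - S.
  move: total; rewrite (bigID [in T]) /= => total.
  under eq_bigl do rewrite finset.in_setC.
  by apply/eqP; rewrite -addr_eq0 addrC total.
have ltS : S <= #|T|%:R * (nu - gamma).
  by rewrite mulr_natl -sumr_const; apply: ler_sum.
have gtS : #|~: T|%:R * (nu + gamma) <= - S.
  rewrite -SC mulr_natl -sumr_const; apply: ler_sum => j.
  by rewrite finset.in_setC; exact: notinT.
have T1 : 1 <= #|T|%:R :> R by rewrite ler1n card_gt0.
have TC1 : 1 <= #|~: T|%:R :> R.
  rewrite ler1n card_gt0; apply: contraNneq TnT => TC0.
  by rewrite -[T]finset.setCK TC0 finset.setC0.
(* nu >= 0: -S >= |~: T| (nu + gamma) >= gamma;
   nu < 0:  -S >= |T| (gamma - nu) >= gamma. *)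
have [nu0|nu0] := lerP 0 nu; nra.
Qed.

Unset Implicit Arguments. Set Strict Implicit.

Theorem proposition2p13 (R : realType) (d n : nat) (U : 'M[R]_(d, n))
  (z c : 'I_n -> R) (T : {set 'I_n}) :
  frame U ->
  (forall j, 0 < z j) ->
  (forall j, 0 < c j) ->
  \sum_j c j = d%:R ->
  T != finset.set0 -> T != finset.setTfor 'I_n ->
  [/\ (forall a b : R, 0 < a -> a <= b -> progress U z T a <= progress U z T b),
      progress U z T a @[a --> +oo] --> ((\rank (subcols U T))%:R : R),
      (forall gamma, is_margin U z c T gamma ->
         gamma <= \sum_(j in T) c j - progress U z T 1) &
      ((\sum_(j in T) c j <= (\rank (subcols U T))%:R) ->
       forall gamma, is_margin U z c T gamma ->
       forall delta : R, 0 <= delta -> delta < gamma ->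
       exists alpha : R, 1 <= alpha /\
         progress U z T alpha = progress U z T 1 + delta)].
Proof.
move=> fU z0 _ sc Tn0 TnT.
have [g [g0 gc hg]] := progress_continuous_in_inv T fU z0.
have margin gamma : is_margin U z c T gamma ->
    gamma <= \sum_(j in T) c j - progress U z T 1 by exact: margin_le_progress1.
split.
- by move=> a b; apply: progress_mono.
- by rewrite -g0; apply: cvgy_inv_substitution => //; apply: gc.
- exact: margin.
- move=> rkT gamma gammaT delta delta0 delta_gamma.
  have [|||alpha alpha1 h_alpha] :=
    ivt_inv_substitution hg (v := progress U z T 1 + delta).
  + by move=> t /andP[t0 _]; apply: gc.
  + by rewrite hg // invr1 lerDl.
  + by have := margin gamma gammaT; rewrite g0; lra.
  by exists alpha.
Qed.
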